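(* Let $\vartheta\in\{p,bp,r\}$. Neither of the spaces $\mathcal{H}_{\vartheta}$ and $\mathcal{L}_u$ is contained in the other; that is, $\mathcal{H}_{\vartheta}\setminus\mathcal{L}_u\neq\emptyset$ and $\mathcal{L}_u\setminus\mathcal{H}_{\vartheta}\neq\emptyset$.
   Context: $\Omega$ denotes the set of all complex double sequences $x=(x_{kl})_{k,l\ge 1}$. A double sequence is $p$-convergent (Pringsheim convergent) to $L$ if for every $\varepsilon>0$ there is $N$ with $|x_{kl}-L|<\varepsilon$ for all $k,l\ge N$; $bp$-convergent if bounded and $p$-convergent; $r$-convergent (regularly convergent) if $p$-convergent and every row and every column converges. For $\vartheta\in\{p,bp,r\}$, $\mathcal{C}_{\vartheta 0}$ is the set of double sequences $\vartheta$-convergent to $0$. $\Delta x_{kl}=x_{kl}-x_{k+1,l}-x_{k,l+1}+x_{k+1,l+1}$, and $\mathcal{H}_{\vartheta}=\{x\in\Omega:\sum_{k,l=1}^{\infty}|kl\,\Delta x_{kl}|<\infty\}\cap\mathcal{C}_{\vartheta 0}$. $\mathcal{L}_u=\{x\in\Omega:\sum_{k,l=1}^{\infty}|x_{kl}|<\infty\}$ is the space of absolutely summable double sequences. *)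

From Stdlib Require Import Reals.
From Coquelicot Require Import Coquelicot.
Open Scope R_scope.

(* A complex double sequence x = (x_{kl})_{k,l>=1} is represented by
   x : nat -> nat -> C with  x k l  standing for x_{k+1,l+1}
   (index shift so that Rocq indices start at 0). *)
Definition dseq := nat -> nat -> C.

Definition p_conv (x : dseq) (L : C) : Prop :=
  forall eps : R, 0 < eps -> exists N : nat,
    forall k l : nat, (N <= k)%nat -> (N <= l)%nat -> Cmod (x k l - L) < eps.

Definition dbounded (x : dseq) : Prop :=
  exists M : R, forall k l : nat, Cmod (x k l) <= M.

Definition seq_conv (u : nat -> C) : Prop :=
  exists L : C, forall eps : R, 0 < eps -> exists N : nat,
    forall n : nat, (N <= n)%nat -> Cmod (u n - L) < eps.

Inductive mode := mode_p | mode_bp | mode_r.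

Definition C0 (th : mode) (x : dseq) : Prop :=
  match th with
  | mode_p => p_conv x 0
  | mode_bp => dbounded x /\ p_conv x 0
  | mode_r => p_conv x 0 /\ (forall k, seq_conv (fun l => x k l))
                         /\ (forall l, seq_conv (fun k => x k l))
  end.

(* sum_{k,l>=1} a_{kl} < infinity for nonnegative a: bounded rectangular partial sums.
   (sum_n a n = a 0 + ... + a n) *)
Definition dsum_finite (a : nat -> nat -> R) : Prop :=
  exists M : R, forall m n : nat,
    sum_n (fun k => sum_n (fun l => a k l) n) m <= M.

Definition Delta (x : dseq) (k l : nat) : C :=
  x k l - x (S k) l - x k (S l) + x (S k) (S l).

(* H_theta; the weight k*l in original indexing is (k+1)*(l+1) after the shift *)
Definition H_space (th : mode) (x : dseq) : Prop :=
  dsum_finite (fun k l => Cmod (RtoC (INR ((S k) * (S l))) * Delta x k l))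
  /\ C0 th x.

Definition L_u (x : dseq) : Prop :=
  dsum_finite (fun k l => Cmod (x k l)).

(* A double sequence that depends on the row index only has vanishing second
   differences, so x_{kl} = 1/k lies in every H_theta, while its first row
   1, 1, 1, ... is not summable. Conversely the diagonal sequence
   x_{kk} = 1/k^2 is absolutely summable, but at the diagonal entries
   k^2 Delta x_{kk} = k^2 (1/k^2 + 1/(k+1)^2) >= 1, so the weighted series
   defining H_theta diverges. *)

From Pilot Require Import Defs.
From Stdlib Require Import Reals Arith Lra Lia.
From Coquelicot Require Import Coquelicot.
Open Scope R_scope.

Lemma sum_f_R0_term_le (f : nat -> R) (k n : nat) :
  (forall i, 0 <= f i) -> (k <= n)%nat -> f k <= sum_f_R0 f n.
Proof.
  intros f_ge0 k_le_n; induction k_le_n as [|n _ IH].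
  - destruct k as [|k]; simpl; [lra|].
    pose proof (cond_pos_sum f k f_ge0); lra.
  - simpl; specialize (f_ge0 (S n)); lra.
Qed.

Lemma sum_n_const_unbounded (c M : R) :
  0 < c -> exists n, M < sum_n (fun _ => c) n.
Proof.
  intros c_pos; destruct (INR_unbounded (M / c)) as [n Hn]; exists n.
  rewrite sum_n_const, S_INR.
  assert (M < INR n * c).
  { replace M with (M / c * c) by (field; lra).
    apply Rmult_lt_compat_r; lra. }
  lra.
Qed.

Lemma not_dsum_finite_of_row_ge (a : nat -> nat -> R) (c : R) :
  0 < c -> (forall l, c <= a 0%nat l) -> ~ dsum_finite a.
Proof.
  intros c_pos row_ge [M HM].
  destruct (sum_n_const_unbounded c M c_pos) as [n Hn].
  specialize (HM 0%nat n); rewrite sum_O in HM; rewrite sum_n_Reals in *.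
  assert (sum_f_R0 (fun _ => c) n <= sum_f_R0 (fun l => a 0%nat l) n)
    by (apply sum_Rle; auto).
  lra.
Qed.

Lemma not_dsum_finite_of_diag_ge (a : nat -> nat -> R) (c : R) :
  0 < c -> (forall k l, 0 <= a k l) -> (forall k, c <= a k k) ->
  ~ dsum_finite a.
Proof.
  intros c_pos a_ge0 diag_ge [M HM].
  destruct (sum_n_const_unbounded c M c_pos) as [n Hn].
  specialize (HM n n); rewrite sum_n_Reals in *.
  assert (sum_f_R0 (fun _ => c) n
          <= sum_f_R0 (fun k => sum_n (fun l => a k l) n) n).
  { apply sum_Rle; intros k k_le_n; rewrite sum_n_Reals.
    apply Rle_trans with (a k k); [apply diag_ge|].
    apply sum_f_R0_term_le; auto. }
  lra.
Qed.

Definition seq_lim (u : nat -> C) (L : C) : Prop :=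
  forall eps : R, 0 < eps -> exists N : nat,
    forall n : nat, (N <= n)%nat -> Cmod (u n - L) < eps.

Lemma seq_lim_const (c : C) : seq_lim (fun _ => c) c.
Proof.
  intros eps eps_pos; exists 0%nat; intros n _.
  replace (c - c)%C with (RtoC 0) by ring.
  rewrite Cmod_R, Rabs_R0; exact eps_pos.
Qed.

Lemma inv_INR_S_bounds (k : nat) : 0 < / INR (S k) <= 1.
Proof.
  assert (1 <= INR (S k)) by (rewrite S_INR; pose proof (pos_INR k); lra).
  split; [apply Rinv_0_lt_compat; lra|].
  rewrite <- Rinv_1; apply Rinv_le_contravar; lra.
Qed.

Lemma seq_lim_inv_S : seq_lim (fun k => RtoC (/ INR (S k))) 0.
Proof.
  intros eps eps_pos; destruct (archimed_cor1 eps eps_pos) as [N [HN N_pos]].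
  exists N; intros k k_ge_N.
  replace (RtoC (/ INR (S k)) - 0)%C with (RtoC (/ INR (S k))) by ring.
  rewrite Cmod_R, Rabs_pos_eq by (left; apply inv_INR_S_bounds).
  apply Rle_lt_trans with (/ INR N); [|exact HN].
  apply Rinv_le_contravar; [apply lt_0_INR; lia | apply le_INR; lia].
Qed.

Section ConstantRows.

Variable v : nat -> C.

Lemma Delta_const_rows (k l : nat) : Defs.Delta (fun k _ => v k) k l = 0.
Proof. unfold Defs.Delta; ring. Qed.

Lemma C0_const_rows (th : mode) :
  seq_lim v 0 -> (exists M, forall k, Cmod (v k) <= M) ->
  C0 th (fun k _ => v k).
Proof.
  intros v_lim [M v_bound].
  assert (x_pconv : p_conv (fun k _ => v k) 0).
  { intros eps eps_pos; destruct (v_lim eps eps_pos) as [N HN].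
    exists N; intros k l k_ge_N _; exact (HN k k_ge_N). }
  destruct th; simpl.
  - exact x_pconv.
  - split; [exists M; intros k _; apply v_bound | exact x_pconv].
  - split; [exact x_pconv | split].
    + intros k; exists (v k); apply seq_lim_const.
    + intros _; exists (RtoC 0); exact v_lim.
Qed.

Lemma H_space_const_rows (th : mode) :
  seq_lim v 0 -> (exists M, forall k, Cmod (v k) <= M) ->
  H_space th (fun k _ => v k).
Proof.
  intros v_lim v_bounded; split; [|apply C0_const_rows; assumption].
  exists 0; intros m n.
  rewrite (sum_n_ext _ (fun _ => 0)); [rewrite sum_n_const; lra|].
  intros k; rewrite (sum_n_ext _ (fun _ => 0)).
  - rewrite sum_n_const; apply Rmult_0_r.
  - intros l; rewrite Delta_const_rows, Cmult_0_r; exact Cmod_0.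
Qed.

Lemma not_L_u_const_rows : 0 < Cmod (v 0%nat) -> ~ L_u (fun k _ => v k).
Proof.
  intros v0_pos; apply (not_dsum_finite_of_row_ge _ (Cmod (v 0%nat)) v0_pos).
  intros l; apply Rle_refl.
Qed.

End ConstantRows.

Definition diag (u : nat -> R) : dseq :=
  fun k l => if Nat.eq_dec k l then RtoC (u k) else 0.

Lemma sum_n_diag_row (u : nat -> R) (k n : nat) :
  sum_n (fun l => Cmod (diag u k l)) n = if le_dec k n then Rabs (u k) else 0.
Proof.
  rewrite sum_n_Reals; unfold diag.
  induction n as [|n IH]; simpl; [|rewrite IH];
    [destruct (Nat.eq_dec k 0), (le_dec k 0)
    | destruct (le_dec k n), (Nat.eq_dec k (S n)), (le_dec k (S n))];
    try lia; rewrite ?Cmod_R, ?Rabs_R0; lra.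
Qed.

Lemma L_u_diag (u : nat -> R) (M : R) :
  (forall m, sum_n (fun k => Rabs (u k)) m <= M) -> L_u (diag u).
Proof.
  intros u_summable; exists M; intros m n.
  apply Rle_trans with (2 := u_summable m); rewrite !sum_n_Reals.
  apply sum_Rle; intros k _; rewrite sum_n_diag_row.
  destruct (le_dec k n); [lra | apply Rabs_pos].
Qed.

Lemma Delta_diag (u : nat -> R) (k : nat) :
  Defs.Delta (diag u) k k = RtoC (u k + u (S k)).
Proof.
  unfold Defs.Delta, diag.
  destruct (Nat.eq_dec k k), (Nat.eq_dec (S k) k), (Nat.eq_dec k (S k)),
    (Nat.eq_dec (S k) (S k)); try lia.
  rewrite RtoC_plus; ring.
Qed.

Lemma not_H_space_diag (th : mode) (u : nat -> R) (c : R) :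
  0 < c -> (forall k, 0 <= u k) -> (forall k, c <= INR (S k) ^ 2 * u k) ->
  ~ H_space th (diag u).
Proof.
  intros c_pos u_ge0 weighted_ge [H_sum _].
  refine (not_dsum_finite_of_diag_ge _ c c_pos _ _ H_sum);
    [intros; apply Cmod_ge_0|].
  intros k; apply Rle_trans with (1 := weighted_ge k).
  rewrite Delta_diag, <- RtoC_mult, Cmod_R, mult_INR.
  pose proof (pos_INR (S k)); pose proof (u_ge0 k); pose proof (u_ge0 (S k)).
  rewrite Rabs_pos_eq; [nra|].
  apply Rmult_le_pos; [|lra]; apply Rmult_le_pos; lra.
Qed.

Definition inv_sq (k : nat) : R := / INR (S k) ^ 2.

Lemma inv_sq_pos (k : nat) : 0 < inv_sq k.
Proof. apply Rinv_0_lt_compat, pow_lt, lt_0_INR; lia. Qed.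

Lemma inv_sq_succ_le (k : nat) :
  inv_sq (S k) <= / INR (S k) - / INR (S (S k)).
Proof.
  unfold inv_sq; rewrite (S_INR (S k)).
  set (a := INR (S k)); assert (0 < a) by (apply lt_0_INR; lia).
  replace (/ a - / (a + 1)) with (/ (a * (a + 1))) by (field; lra).
  apply Rinv_le_contravar; nra.
Qed.

Lemma sum_inv_sq_le (m : nat) : sum_f_R0 inv_sq m <= 2 - / INR (S m).
Proof.
  induction m as [|m IH]; simpl sum_f_R0.
  - unfold inv_sq; simpl; lra.
  - pose proof (inv_sq_succ_le m); lra.
Qed.

Theorem theorem2p4 (th : mode) :
  (exists x : dseq, H_space th x /\ ~ L_u x) /\
  (exists x : dseq, L_u x /\ ~ H_space th x).
Proof.
  split.
  - exists (fun k _ => RtoC (/ INR (S k))); split.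
    + apply H_space_const_rows; [exact seq_lim_inv_S|].
      exists 1; intros k; pose proof (inv_INR_S_bounds k).
      rewrite Cmod_R, Rabs_pos_eq; lra.
    + apply not_L_u_const_rows; simpl; rewrite Rinv_1, Cmod_R, Rabs_R1; lra.
  - exists (diag inv_sq); split.
    + apply (L_u_diag inv_sq 2); intros m; rewrite sum_n_Reals.
      rewrite (sum_eq _ inv_sq)
        by (intros k _; apply Rabs_pos_eq, Rlt_le, inv_sq_pos).
      pose proof (sum_inv_sq_le m); pose proof (inv_INR_S_bounds m); lra.
    + apply (not_H_space_diag th inv_sq 1);
        [lra | intros; apply Rlt_le, inv_sq_pos|].
      intros k; unfold inv_sq; right; field; apply not_0_INR; lia.
Qed.
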